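(* Let $k\ge1$, $n\ge2$, $\eta\in[0,1/2)$, $p\le n^k$, and let $m$ be such that $\frac mp\ge\frac{24k}{(1-2\eta)^2}\log n$. For each $u\in[p]$ let $\mathcal H_u=\mathcal H_u^{(L)}\sqcup\mathcal H_u^{(R)}$ with $|\mathcal H_u^{(L)}|=|\mathcal H_u^{(R)}|=\frac m{2p}$, let $\xi_u(C)$, $u\in[p]$, $C\in\mathcal H_u$, be i.i.d. random variables equal to $-1$ with probability $\eta$ and $+1$ otherwise, and let $P_u\subseteq\mathcal H_u^{(L)}\times\mathcal H_u^{(R)}$ be fixed sets (independent of the $\xi$'s) with $|P_u|=(1-\varepsilon_u)\frac{m^2}{4p^2}$, $\varepsilon_u\in[0,1]$, and $\frac1p\sum_{u}\varepsilon_u\le\varepsilon$. Run the following procedure given the $P_u$ and the values $\xi_u(C)\xi_u(C')$ for $(C,C')\in P_u$: for each $u$, if $\varepsilon_u\ge1/3$ set $\mathcal A^{(1)}_u=\mathcal H_u$, $\mathcal A^{(2)}_u=\emptyset$; otherwise let $G_u$ be the graph on vertex set $\mathcal H_u$ with edge set $P_u$, let $S_u$ be (the vertex set of) a largest connected component of $G_u$, compute $z\in\{-1,1\}^{S_u}$ with $z_Cz_{C'}=\xi_u(C)\xi_u(C')$ for all edges $(C,C')$ of $G_u$ inside $S_u$ (by fixing $z$ at one vertex and propagating), replace $z$ by $-z$ if $z$ has more than $|S_u|/2$ entries equal to $-1$ (ties broken arbitrarily), and set $\mathcal A^{(1)}_u=\mathcal H_u\setminus S_u$, $\mathcal A^{(2)}_u=\{C\in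 S_u:z_C=-1\}$. Then (1) $\sum_{u\in[p]}|\mathcal A^{(1)}_u|\le4\varepsilon m$, and (2) with probability at least $1-n^{-k}$ over the $\xi$'s, for every $u\in[p]$, $\mathcal A^{(2)}_u=\{C\in\mathcal H_u:\xi_u(C)=-1\}\setminus\mathcal A^{(1)}_u$. *)

From HB Require Import structures.
From mathcomp Require Import all_boot all_order all_algebra.
From mathcomp Require Import boolp reals exp.
Set Implicit Arguments. Unset Strict Implicit. Unset Printing Implicit Defensive.
Import Order.TTheory GRing.Theory Num.Theory.
Local Open Scope ring_scope.

(* Vertex set H_u = H_u^(L) ⊔ H_u^(R), each half of size h. *)
Notation Hv h := ('I_h + 'I_h)%type.

Definition gedge (h : nat) (P : {set 'I_h * 'I_h}) : rel (Hv h) :=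
  fun x y => match x, y with
             | inl a, inr b => (a, b) \in P
             | inr b, inl a => (a, b) \in P
             | _, _ => false
             end.

Definition component (h : nat) (P : {set 'I_h * 'I_h}) (x : Hv h) : {set Hv h} :=
  [set y | connect (gedge P) x y].

Definition largest_component (h : nat) (P : {set 'I_h * 'I_h}) (S : {set Hv h}) : Prop :=
  (exists x, S = component P x) /\ (forall x, (#|component P x| <= #|S|)%N).

Definition sgnb (b : bool) : int := if b then -1 else 1.

(* (A1, A2) is a possible output of the procedure for block u, given the
   fixed edge set P, epsilon_u, and the signs xi (xi C = true iff xi_u(C) = -1).
   All arbitrary choices (which largest component, which propagation, tie-breaks)
   are allowed; only products xi(C) xi(C') along edges are used. *)
Definition valid_output (R : realType) (h : nat) (P : {set 'I_h * 'I_h})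
    (epsu : R) (xi : Hv h -> bool) (A1 A2 : {set Hv h}) : Prop :=
  if 1 / 3 <= epsu then A1 = setT /\ A2 = set0
  else exists (S : {set Hv h}) (z : Hv h -> bool),
    [/\ largest_component P S,
        (forall C C', C \in S -> C' \in S -> gedge P C C' ->
           sgnb (z C) * sgnb (z C') = sgnb (xi C) * sgnb (xi C')),
        (2 * #|[set C in S | z C]| <= #|S|)%N,
        A1 = ~: S &
        A2 = [set C in S | z C]].

Definition prob (R : realType) (I : finType) (eta : R)
    (E : {ffun I -> bool} -> Prop) : R :=
  \sum_(w : {ffun I -> bool} | `[< E w >]) \prod_(i : I) (if w i then eta else 1 - eta).

(* Part (1): a block with [epsu >= 1/3] contributes [2h <= 8 epsu h]. Otherwise
   let [a], [b] be the sizes of the two halves of the largest component [S].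
   Every edge lies inside [S] or inside its complement, and no left vertex has
   more than [|S|] neighbours, so [(1 - epsu) h^2] is at most both
   [ab + (h - a)(h - b)] and [h (a + b)]; this forces [|A1| = 2h - |S| <= 2 epsu h].
   Part (2): the propagated signs agree with [xi] on [S] up to a global sign,
   which the majority normalisation fixes as soon as fewer than half of the
   signs on [S] are [-1]. Since [|S| > h] and [S] is then the unique largest
   component, a block fails with probability at most the binomial tail
   [(4 eta (1 - eta))^(|S|/2) <= exp (-(1 - 2 eta)^2 h / 2) <= n^-2k], and a
   union bound over the [p <= n^k] blocks concludes. *)

From HB Require Import structures.
From mathcomp Require Import all_boot all_order all_algebra.
From mathcomp Require Import boolp reals exp sequences.
From mathcomp Require Import zify ring lra.
Set Implicit Arguments. Unset Strict Implicit. Unset Printing Implicit Defensive.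
Import Order.TTheory GRing.Theory Num.Theory.
Local Open Scope ring_scope.

Section BipartiteGraph.
Variables (h : nat) (P : {set 'I_h * 'I_h}).

Lemma gedge_sym : symmetric (gedge P).
Proof. by case=> a [b|b] //; case. Qed.

Lemma component_self x : x \in component P x.
Proof. by rewrite inE connect0. Qed.

Lemma component_edge x y z :
  y \in component P x -> gedge P y z -> z \in component P x.
Proof. by rewrite !inE => cxy eyz; apply: connect_trans cxy (connect1 eyz). Qed.

Lemma component_eq x y : y \in component P x -> component P y = component P x.
Proof.
rewrite inE => cxy; apply/setP => z; rewrite !inE.
by rewrite (same_connect (sym_connect_sym gedge_sym) cxy).
Qed.

Lemma component_const (T : Type) (f : Hv h -> T) x :
  (forall y z, y \in component P x -> z \in component P x ->
     gedge P y z -> f y = f z) ->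
  {in component P x, forall y, f y = f x}.
Proof.
move=> fE y; rewrite inE => /connectP[q qpath ->].
suff: forall z, z \in component P x -> path (gedge P) z q -> f (last z q) = f z.
  by apply; rewrite ?component_self.
elim: q {qpath} => [|y' q IHq] z //= zx /andP[ezy qy].
have y'x := component_edge zx ezy.
by rewrite IHq // (fE z y').
Qed.

Definition lpart (S : {set Hv h}) : {set 'I_h} := [set i | inl i \in S].
Definition rpart (S : {set Hv h}) : {set 'I_h} := [set i | inr i \in S].

Lemma card_lpart_rpart (S : {set Hv h}) : #|S| = (#|lpart S| + #|rpart S|)%N.
Proof.
rewrite -!sum1_card big_sumType /=.
by congr (_ + _)%N; apply: eq_bigl => i; rewrite inE.
Qed.

Lemma card_edges_le_closed (S : {set Hv h}) :
  (forall y z, y \in S -> gedge P y z -> z \in S) ->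
  (#|P| <= #|lpart S| * #|rpart S| + (h - #|lpart S|) * (h - #|rpart S|))%N.
Proof.
move=> closedS.
have edges_split : P \subset setX (lpart S) (rpart S) :|: setX (~: lpart S) (~: rpart S).
  apply/subsetP => -[i j] Pij.
  have lr : (inr j \in S) = (inl i \in S).
    by apply/idP/idP => /closedS; apply.
  by rewrite !inE lr; case: (inl i \in S).
apply: leq_trans (subset_leq_card edges_split) _.
have cardC (A : {set 'I_h}) : #|~: A| = (h - #|A|)%N by rewrite cardsCs setCK card_ord.
by rewrite cardsU !cardsX !cardC leq_subr.
Qed.

Lemma card_edges_le_max_component s :
  (forall x, #|component P x| <= s)%N -> (#|P| <= h * s)%N.
Proof.
move=> maxS.
have -> : #|P| = (\sum_(i < h) #|[set j | (i, j) \in P]|)%N.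
  rewrite -sum1_card (eq_bigr (fun i => \sum_(j | (i, j) \in P) 1)%N) => [|i _].
    by rewrite pair_big_dep; apply: eq_bigl => -[i j].
  by rewrite -sum1_card; apply: eq_bigl => j; rewrite inE.
rewrite -[h in (h * s)%N]card_ord -sum_nat_const; apply: leq_sum => i _.
apply: leq_trans (maxS (inl i)); rewrite card_lpart_rpart.
apply: leq_trans (leq_addl _ _); apply: subset_leq_card; apply/subsetP => j.
rewrite !inE => Pij.
by have := @component_edge (inl i) (inl i) (inr j) (component_self _) Pij; rewrite inE.
Qed.

End BipartiteGraph.

(* [(2h - d) d] is concave in [d = 2h - (a + b)]; on [(2eh, (1+e)h]] it exceeds [2eh^2]. *)
Lemma component_halves_large (R : realFieldType) (h a b e : R) :
  0 <= a <= h -> 0 <= b <= h -> 0 <= e -> e < 1 / 3 ->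
  (1 - e) * h ^+ 2 <= a * b + (h - a) * (h - b) ->
  (1 - e) * h ^+ 2 <= h * (a + b) ->
  2 * h - (a + b) <= 2 * e * h.
Proof.
move=> /andP[a0 ah] /andP[b0 bh] e0 e13 inside maxdeg.
set d := 2 * h - (a + b).
have amgm : 4 * (a * b) <= (a + b) ^+ 2 by have := sqr_ge0 (a - b); nra.
have quad : (2 * h - d) * d <= 2 * e * h ^+ 2 by rewrite /d; nra.
have dmax : h * d <= (1 + e) * h ^+ 2 by rewrite /d; nra.
rewrite leNgt; apply/negP => dmin.
have h0 : 0 < h by have := mulr_ge0 e0 (le_trans a0 ah); rewrite /d in dmin; lra.
have dmax' : d <= (1 + e) * h by nra.
have : 0 <= (d - 2 * e * h) * ((1 + e) * h - d) by apply: mulr_ge0; lra.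
have : 0 <= (1 - 3 * e) * h * (d - 2 * e * h) by do 2?apply: mulr_ge0; lra.
nra.
Qed.

Section LargestComponent.
Variables (R : realFieldType) (h : nat) (P : {set 'I_h * 'I_h}) (e : R).
Hypotheses (e0 : 0 <= e) (card_P : #|P|%:R = (1 - e) * h%:R ^+ 2).

Lemma largest_component_card S : e < 1 / 3 ->
  largest_component P S -> 2 * h%:R - #|S|%:R <= 2 * e * h%:R.
Proof.
move=> e13 [[x ->] maxS].
have card_half (A : {set 'I_h}) : (#|A| <= h)%N by rewrite -[h in (_ <= h)%N]card_ord max_card.
have inside := card_edges_le_closed (@component_edge _ P x).
have maxdeg := card_edges_le_max_component maxS.
rewrite card_lpart_rpart in maxdeg *.
rewrite -(ler_nat R) !natrD !natrM !natrB ?card_half // card_P in inside.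
rewrite -(ler_nat R) natrM natrD card_P in maxdeg.
by rewrite natrD; apply: component_halves_large; rewrite ?ler0n ?ler_nat ?card_half.
Qed.

Lemma largest_component_gt S : e < 1 / 3 -> largest_component P S -> (h < #|S|)%N.
Proof.
move=> e13 lS; have := largest_component_card e13 lS.
have h0 : 0 < h%:R :> R.
  by rewrite ltr0n; case: lS => -[[i|i] _] _; apply: leq_ltn_trans (ltn_ord i).
have : e * h%:R < 1 / 3 * h%:R by rewrite ltr_pM2r.
by rewrite -(ltr_nat R); lra.
Qed.

End LargestComponent.

Lemma largest_component_unique h (P : {set 'I_h * 'I_h}) S S' :
  largest_component P S -> largest_component P S' ->
  (h < #|S|)%N -> (h < #|S'|)%N -> S = S'.
Proof.
move=> [[x ->] _] [[y ->] _] hS hS'.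
have [disj | [z]] := set_0Vmem (component P x :&: component P y).
  have := max_card (mem (component P x :|: component P y)).
  by rewrite card_sum card_ord cardsU disj cards0; lia.
by rewrite inE => /andP[zx zy]; rewrite -(component_eq zx) (component_eq zy).
Qed.

Definition recovers (R : realType) (h : nat) (P : {set 'I_h * 'I_h}) (e : R)
    (xi : Hv h -> bool) : Prop :=
  forall A1 A2, valid_output P e xi A1 A2 -> A2 = [set C | xi C] :\: A1.

Section Output.
Variables (R : realType) (h : nat) (P : {set 'I_h * 'I_h}) (e : R).
Variable xi : Hv h -> bool.

Lemma card_A1_le A1 A2 : 0 <= e -> #|P|%:R = (1 - e) * h%:R ^+ 2 ->
  valid_output P e xi A1 A2 -> #|A1|%:R <= 8 * e * h%:R.
Proof.
move=> e0 card_P; rewrite /valid_output.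
case: ifP => [e13 [-> _] | /negbT e13 [S [z [lS _ _ -> _]]]].
  rewrite cardsT card_sum card_ord natrD.
  by have := ler_wpM2r (ler0n R h) e13; have := ler0n R h; lra.
rewrite -ltNge in e13; have := largest_component_card e0 card_P e13 lS.
have := cardsC S; rewrite card_sum card_ord => /(f_equal (fun n => n%:R : R)).
by rewrite !natrD; have := mulr_ge0 e0 (ler0n R h); lra.
Qed.

Lemma sgnb_eq_addb a b c d : sgnb a * sgnb b = sgnb c * sgnb d -> a (+) c = b (+) d.
Proof. by case: a; case: b; case: c; case: d => //= /eqP. Qed.

Lemma valid_output_correct :
  (e < 1 / 3 -> forall S, largest_component P S ->
     (2 * #|[set C in S | xi C]| < #|S|)%N) ->
  recovers P e xi.
Proof.
move=> minority A1 A2; rewrite /valid_output.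
case: ifP => [_ [-> ->] | /negbT e13 [S [z [lS zxi zmin -> ->]]]]; first by rewrite setDT.
rewrite -ltNge in e13; have xi_min := minority e13 S lS.
have [[x0 Sx0] _] := lS.
have flip : {in S, forall C, z C (+) xi C = z x0 (+) xi x0}.
  rewrite Sx0; apply: (component_const (f := fun C => z C (+) xi C)) => C C' CS C'S eCC'.
  by apply: sgnb_eq_addb; apply: zxi; rewrite ?Sx0.
case: (z x0 (+) xi x0) flip => flip; last first.
  apply/setP => C; rewrite !inE negbK.
  by case CS: (C \in S) => //=; have := flip C CS; case: (z C); case: (xi C).
have zC : [set C in S | z C] = S :\: [set C in S | xi C].
  apply/setP => C; rewrite !inE; case CS: (C \in S); rewrite ?andbF //=.
  by have := flip C CS; case: (z C); case: (xi C).
move: zmin; rewrite zC cardsD (setIidPr _); last by apply/subsetP => C; rewrite inE => /andP[].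
by move: xi_min; set s := #|S|; set t := #|[set C in S | xi C]|; lia.
Qed.

End Output.

Lemma sum_card_A1_le (R : realType) (p h : nat) (P : 'I_p -> {set 'I_h * 'I_h})
    (epsu : 'I_p -> R) (xi : 'I_p -> Hv h -> bool) (A1 A2 : 'I_p -> {set Hv h}) :
  (forall u, 0 <= epsu u) -> (forall u, #|P u|%:R = (1 - epsu u) * h%:R ^+ 2) ->
  (forall u, valid_output (P u) (epsu u) (xi u) (A1 u) (A2 u)) ->
  \sum_u #|A1 u|%:R <= 8 * h%:R * \sum_u epsu u.
Proof.
move=> epsu0 card_P out; rewrite mulr_sumr; apply: ler_sum => u _.
by rewrite mulrAC; apply: card_A1_le (out u).
Qed.

Lemma majority_pattern_sq_le (R : realFieldType) (eta : R) (s t : nat) :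
  0 <= eta <= 1 / 2 -> (s <= 2 * t)%N -> (t <= s)%N ->
  (eta ^+ t * (1 - eta) ^+ (s - t)) ^+ 2 <= (eta * (1 - eta)) ^+ s.
Proof.
move=> /andP[eta0 eta12] st ts; set d := (2 * t - s)%N.
have tt : (t * 2 = s + d)%N by rewrite /d; lia.
have ss : (s = (s - t) * 2 + d)%N by rewrite /d; lia.
have -> : (eta ^+ t * (1 - eta) ^+ (s - t)) ^+ 2
    = eta ^+ s * ((1 - eta) ^+ ((s - t) * 2) * eta ^+ d).
  by rewrite exprMn -!exprM tt exprD -mulrA [eta ^+ d * _]mulrC.
have -> : (eta * (1 - eta)) ^+ s = eta ^+ s * ((1 - eta) ^+ ((s - t) * 2) * (1 - eta) ^+ d).
  by rewrite exprMn -exprD -ss.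
rewrite ler_wpM2l ?ler_wpM2l ?exprn_ge0 //; try lra.
by apply: lerXn2r; rewrite ?nnegrE; lra.
Qed.

Definition weight (R : realType) (eta : R) (b : bool) : R :=
  if b then eta else 1 - eta.

Section Probability.
Variables (R : realType) (eta : R) (I : finType).
Hypotheses (eta0 : 0 <= eta) (eta1 : eta <= 1).

Local Notation event := ({ffun I -> bool} -> Prop).

Lemma weight_ge0 b : 0 <= weight eta b.
Proof. by case: b; rewrite /weight /= ?subr_ge0. Qed.

Lemma prob_weight_ge0 (w : {ffun I -> bool}) : 0 <= \prod_i weight eta (w i).
Proof. by apply: prodr_ge0 => i _; apply: weight_ge0. Qed.

Lemma le_prob (E F : event) : (forall w, E w -> F w) -> prob eta E <= prob eta F.
Proof.
move=> EF; rewrite /prob [leLHS]big_mkcond [leRHS]big_mkcond.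
apply: ler_sum => w _; case: (asboolP (E w)) => [/EF/asboolT -> // | _].
by case: ifP => _; [apply: prob_weight_ge0 |].
Qed.

Lemma prob_agree (A : {set I}) (g : I -> bool) :
  prob eta (fun w => forall i, i \in A -> w i = g i) = \prod_(i in A) weight eta (g i).
Proof.
pose F i b := (if i \in A then (b == g i)%:R else 1) * weight eta b.
rewrite /prob big_mkcond /=.
transitivity (\sum_(w : {ffun I -> bool}) \prod_i F i (w i)).
  apply: eq_bigr => w _; rewrite /F big_split /=.
  have -> : `[< forall i, i \in A -> w i = g i >] = [forall i in A, w i == g i].
    by apply/asboolP/forall_inP => agree i /agree; [move-> | move/eqP].
  case: (boolP [forall i in A, w i == g i]) => [/forall_inP agree | /forall_inPn[i iA wi]].
    by rewrite [X in X * _]big1 ?mul1r // => i _; case: ifP => // /agree /eqP ->; rewrite eqxx.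
  by rewrite (bigD1 i) //= iA (negbTE wi) !mul0r.
rewrite -bigA_distr_bigA /= [RHS]big_mkcond /=.
apply: eq_bigr => i _; rewrite big_bool /F /weight.
case: ifP => iA; last by rewrite /= !mul1r; ring.
by case: (g i); rewrite /= ?mul1r ?mul0r ?addr0 ?add0r.
Qed.

Lemma prob_True : prob eta (fun _ : {ffun I -> bool} => True) = 1.
Proof.
have := prob_agree set0 xpredT; rewrite big_set0 => <-.
by apply: eq_bigl => w; apply/asboolP/asboolP => // _ i; rewrite inE.
Qed.

Lemma prob_not (E : event) : prob eta (fun w => ~ E w) = 1 - prob eta E.
Proof.
rewrite -prob_True /prob [X in _ = X - _](bigID (fun w => `[< E w >])) (asboolT Logic.I) /=.
by rewrite [X in X - _]addrC addrK; apply: eq_bigl => w; rewrite asbool_neg.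
Qed.

Lemma prob_union (J : finType) (Q : pred J) (F : J -> event) (E : event) :
  (forall w, E w -> exists2 j, Q j & F j w) ->
  prob eta E <= \sum_(j | Q j) prob eta (F j).
Proof.
move=> cover; rewrite /prob; under [leRHS]eq_bigr do rewrite big_mkcond.
have cond_ge0 (b : bool) (w : {ffun I -> bool}) :
    0 <= if b then \prod_i weight eta (w i) else 0.
  by case: b => //; apply: prob_weight_ge0.
rewrite exchange_big /= big_mkcond /=; apply: ler_sum => w _.
case: (asboolP (E w)) => [/cover[j Qj Fjw] | _].
  by rewrite (bigD1 j) //= (asboolT Fjw) lerDl; apply: sumr_ge0 => i _; apply: cond_ge0.
by apply: sumr_ge0 => j _; apply: cond_ge0.
Qed.

Lemma prob_forall_ge (J : finType) (E : J -> event) :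
  1 - \sum_j prob eta (fun w => ~ E j w) <= prob eta (fun w => forall j, E j w).
Proof.
have := prob_not (fun w => forall j, E j w).
have : prob eta (fun w => ~ forall j, E j w) <= \sum_j prob eta (fun w => ~ E j w).
  by apply: prob_union => w /existsNP[j notEj]; exists j.
lra.
Qed.

Lemma prob_eq0 (E : event) : (forall w, ~ E w) -> prob eta E = 0.
Proof. by move=> noE; rewrite /prob big_pred0 // => w; apply: asboolF. Qed.

Lemma prod_weight_subset (S T : {set I}) : T \subset S ->
  \prod_(i in S) weight eta (i \in T) = eta ^+ #|T| * (1 - eta) ^+ (#|S| - #|T|).
Proof.
move=> TS; rewrite (big_setID T) /= (setIidPr TS) -(cardsDS TS).
rewrite (eq_bigr (fun _ => eta)) => [|i iT]; last by rewrite /weight iT.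
rewrite [X in _ * X](eq_bigr (fun _ => 1 - eta)) => [|i]; last first.
  by rewrite inE => /andP[/negbTE iT _]; rewrite /weight iT.
by rewrite !prodr_const.
Qed.

Lemma prob_majority_le (S : {set I}) (X : R) :
  eta <= 1 / 2 -> 0 <= X -> (4 * eta * (1 - eta)) ^+ #|S| <= X ^+ 2 ->
  prob eta (fun w => #|S| <= 2 * #|[set i in S | w i]|)%N <= X.
Proof.
move=> eta12 X0 noise; set s := #|S| in noise *.
have eta_half : 0 <= eta <= 1 / 2 by rewrite eta0 eta12.
have s2 : (0 : R) < 2 ^+ s by rewrite exprn_gt0.
have pattern_le (T : {set I}) : T \subset S -> (s <= 2 * #|T|)%N ->
    \prod_(i in S) weight eta (i \in T) <= X / 2 ^+ s.
  move=> TS sT; rewrite prod_weight_subset // -ler_sqr ?nnegrE; last 2 first.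
  - by apply: mulr_ge0; apply: exprn_ge0; rewrite ?subr_ge0.
  - by apply: divr_ge0 => //; apply: ltW.
  apply: le_trans (majority_pattern_sq_le eta_half sT (subset_leq_card TS)) _.
  have -> : (eta * (1 - eta)) ^+ s = (4 * eta * (1 - eta)) ^+ s / (2 ^+ s) ^+ 2.
    by rewrite -exprM mulnC exprM -expr_div_n; congr (_ ^+ _); field.
  by rewrite expr_div_n ler_pM2r // invr_gt0 exprn_gt0.
pose Q T := (T \in powerset S) && (s <= 2 * #|T|)%N.
apply: le_trans (prob_union (Q := Q) (F := fun T w => forall i, i \in S -> w i = (i \in T)) _) _.
  move=> w maj; exists [set i in S | w i]; last by move=> i iS; rewrite inE iS.
  by rewrite /Q powersetE maj andbT; apply/subsetP => i; rewrite inE => /andP[].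
under eq_bigr do rewrite prob_agree.
apply: le_trans (_ : \sum_(T in powerset S) X / 2 ^+ s <= _); last first.
  by rewrite sumr_const card_powerset -/s -[X / _ *+ _]mulr_natr natrX mulfVK // gt_eqF.
rewrite [leRHS](bigID (fun T : {set I} => s <= 2 * #|T|)%N) /=.
apply: ler_wpDr; first by apply: sumr_ge0 => T _; apply: divr_ge0 => //; apply: ltW.
by apply: ler_sum => T /andP[TS sT]; apply: pattern_le; rewrite -?powersetE.
Qed.

End Probability.

Lemma noise_expr_le_invn (R : realType) (eta : R) (s j n : nat) :
  0 <= eta <= 1 -> (0 < n)%N ->
  j%:R * ln (n%:R : R) <= (1 - 2 * eta) ^+ 2 * s%:R ->
  (4 * eta * (1 - eta)) ^+ s <= (n%:R ^+ j)^-1.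
Proof.
move=> /andP[eta0 eta1] n0 jln.
have noise0 : 0 <= 4 * eta * (1 - eta) by apply: mulr_ge0; lra.
apply: le_trans (_ : expR (- (1 - 2 * eta) ^+ 2) ^+ s <= _).
  apply: lerXn2r; rewrite ?nnegrE ?expR_ge0 //.
  have -> : 4 * eta * (1 - eta) = 1 + - (1 - 2 * eta) ^+ 2 by ring.
  exact: expR_ge1Dx.
rewrite -expRM_natr; apply: le_trans (_ : expR (- (j%:R * ln (n%:R : R))) <= _).
  by rewrite ler_expR mulNr lerN2.
by rewrite expRN expRM_natl lnK // posrE ltr0n.
Qed.

Lemma pair_inj (I J : Type) (u : I) : injective (@pair I J u).
Proof. by move=> x y []. Qed.

Lemma card_pair_imset_filter (I J : finType) (u : I) (S : {set J}) (q : pred (I * J)) :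
  #|[set i in pair u @: S | q i]| = #|[set j in S | q (u, j)]|.
Proof.
suff -> : [set i in pair u @: S | q i] = pair u @: [set j in S | q (u, j)].
  by rewrite card_imset //; apply: pair_inj.
apply/setP => -[a j]; rewrite !inE.
apply/andP/imsetP => [[/imsetP[j' j'S [-> ->]] q_uj] | [j' + [-> ->]]].
  by exists j'; rewrite // inE j'S.
by rewrite inE => /andP[j'S q_uj']; split; first exact: imset_f.
Qed.

Lemma prob_not_recovers_le (R : realType) (I : finType) (u : I) (h : nat)
    (P : {set 'I_h * 'I_h}) (e eta X : R) :
  0 <= e -> #|P|%:R = (1 - e) * h%:R ^+ 2 -> 0 <= eta <= 1 / 2 -> 0 <= X ->
  (4 * eta * (1 - eta)) ^+ h <= X ^+ 2 ->
  prob eta (fun w : {ffun I * Hv h -> bool} => ~ recovers P e (fun C => w (u, C))) <= X.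
Proof.
move=> e0 card_P /andP[eta0 eta12] X0 noise; have eta1 : eta <= 1 by lra.
case: (pickP (fun S => `[< largest_component P S >] && (e < 1 / 3))) => [S0 | none].
  case/andP=> /asboolP lS0 e13.
  have card_S0 : #|pair u @: S0| = #|S0| by rewrite card_imset //; apply: pair_inj.
  apply: le_trans (prob_majority_le eta0 eta1 (S := pair u @: S0) eta12 X0 _); last first.
    have noise0 : 0 <= 4 * eta * (1 - eta) by apply: mulr_ge0; lra.
    rewrite card_S0; apply: le_trans noise; apply: (ler_wiXn2l noise0); first nra.
    exact/ltnW/(largest_component_gt e0 card_P e13 lS0).
  apply: (le_prob eta0 eta1) => w fail; rewrite card_S0 card_pair_imset_filter leqNgt.
  apply/negP => minority; apply: fail; apply: valid_output_correct => _ S lS.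
  by rewrite (largest_component_unique lS lS0) ?(largest_component_gt e0 card_P e13).
rewrite prob_eq0 // => w; apply; apply: valid_output_correct => e13 S lS.
by have := none S; rewrite (asboolT lS) e13.
Qed.

Lemma noise_expr_h_le (R : realType) (eta : R) (k n h : nat) :
  0 <= eta < 1 / 2 -> (0 < n)%N ->
  24 * k%:R / (1 - 2 * eta) ^+ 2 * ln (n%:R : R) <= 2 * h%:R ->
  (4 * eta * (1 - eta)) ^+ h <= ((n%:R ^+ (2 * k))^-1) ^+ 2.
Proof.
move=> /andP[eta0 eta12] n0 sample_size.
rewrite exprVn -exprM; apply: noise_expr_le_invn => //; first by rewrite eta0; lra.
have delta0 : 0 < (1 - 2 * eta) ^+ 2 by rewrite exprn_gt0 //; lra.
have : 0 <= k%:R * ln (n%:R : R) by rewrite mulr_ge0 ?ln_ge0 ?ler1n.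
rewrite mulrAC ler_pdivrMr // in sample_size.
by rewrite !natrM; nra.
Qed.

Theorem mainTheorem13 (R : realType) (k n p m : nat) (eta eps : R)
  (epsu : 'I_p -> R) (P : 'I_p -> {set 'I_(m %/ (2 * p)) * 'I_(m %/ (2 * p))}) :
  (1 <= k)%N -> (2 <= n)%N -> 0 <= eta -> eta < 1 / 2 ->
  (0 < p)%N -> (p <= n ^ k)%N -> (2 * p %| m)%N ->
  24 * k%:R / (1 - 2 * eta) ^+ 2 * ln (n%:R : R) <= m%:R / p%:R ->
  (forall u, 0 <= epsu u <= 1) ->
  (forall u, (#|P u|%:R : R) = (1 - epsu u) * m%:R ^+ 2 / (4 * p%:R ^+ 2)) ->
  (\sum_(u < p) epsu u) / p%:R <= eps ->
  (forall (w : {ffun 'I_p * Hv (m %/ (2 * p)) -> bool})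
          (A1 A2 : 'I_p -> {set Hv (m %/ (2 * p))}),
      (forall u, valid_output (P u) (epsu u) (fun C => w (u, C)) (A1 u) (A2 u)) ->
      \sum_(u < p) (#|A1 u|%:R : R) <= 4 * eps * m%:R)
  /\
  1 - (n%:R : R) ^- k <=
    prob eta (fun w : {ffun 'I_p * Hv (m %/ (2 * p)) -> bool} =>
      forall (u : 'I_p) (A1 A2 : {set Hv (m %/ (2 * p))}),
        valid_output (P u) (epsu u) (fun C => w (u, C)) A1 A2 ->
        A2 = [set C | w (u, C)] :\: A1).
Proof.
move=> _ n2 eta0 eta12 p0 pn dvd_m sample_size epsu01 card_P eps_avg.
set h := (m %/ (2 * p))%N in P card_P *.
have p_pos : (0 : R) < p%:R by rewrite ltr0n.
have mE : m%:R = 2 * p%:R * h%:R :> R by rewrite -natrM mulrC -natrM /h divnK.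
have m_p : m%:R / p%:R = 2 * h%:R :> R by rewrite mE mulrAC mulfK ?gt_eqF.
have card_Pu u : #|P u|%:R = (1 - epsu u) * h%:R ^+ 2.
  by rewrite card_P mE; field; rewrite gt_eqF.
have epsu0 u : 0 <= epsu u by case/andP: (epsu01 u).
split=> [w A1 A2 out | ].
  apply: le_trans (sum_card_A1_le epsu0 card_Pu out) _.
  rewrite ler_pdivrMr // in eps_avg.
  by rewrite mE; have := ler_wpM2l (ler0n R h) eps_avg; lra.
have eta1 : eta <= 1 by lra.
have noise : (4 * eta * (1 - eta)) ^+ h <= ((n%:R ^+ (2 * k))^-1) ^+ 2.
  apply: noise_expr_h_le (ltnW n2) _; first by rewrite eta0.
  by rewrite -m_p.
apply: le_trans (prob_forall_ge eta0 eta1 (fun u w => recovers (P u) (epsu u) (fun C => w (u, C)))).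
rewrite lerD2l lerN2; apply: le_trans (_ : \sum_(u < p) (n%:R ^+ (2 * k))^-1 <= _).
  apply: ler_sum => u _; apply: prob_not_recovers_le noise => //; first by rewrite eta0 ltW.
  by rewrite invr_ge0 exprn_ge0 ?ler0n.
have nk_pos : (0 : R) < n%:R ^+ k by rewrite exprn_gt0 // ltr0n ltnW.
rewrite sumr_const card_ord -[_ *+ p]mulr_natl mul2n -addnn exprD invfM mulrA.
apply: ler_piMl; first by rewrite invr_ge0 ltW.
by rewrite ler_pdivrMr // mul1r -natrX ler_nat.
Qed.
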